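(* Let $\Omega$ be as in the context and suppose $\Omega$ is nonempty and bounded, $0\notin\Omega$, and $\Omega\cap\mathcal{R}\neq\emptyset$. Consider $$\text{(P)}\quad \min\{\langle\overline{C},Y\rangle : Y\in\Omega\cap\mathcal{R}\}\qquad\text{and}\qquad \text{(P}_\rho)\quad \min\{\langle\overline{C},Y\rangle+\rho\operatorname{rank}(Y) : Y\in\Omega\}.$$ Then there exists $\overline{\rho}>0$ such that for every $\rho\ge\overline{\rho}$ the set of global optimal solutions of (P$_\rho$) coincides with the set of global optimal solutions of (P).
   Context: $\mathcal{S}^q$ is the space of real symmetric $q\times q$ matrices with trace inner product $\langle P,Q\rangle=\operatorname{tr}(PQ)$; $\mathcal{S}^q_+$ the positive semidefinite cone; $\mathcal{N}^q$ the entrywise nonnegative matrices in $\mathcal{S}^q$. Given $\overline{C}\in\mathcal{S}^q$, a linear map $\mathcal{A}:\mathcal{S}^q\to\mathbb{R}^m$ and $b\in\mathbb{R}^m$, set $\Omega:=\{Y\in\mathcal{S}^q_+\cap\mathcal{N}^q : \mathcal{A}(Y)=b\}$ and $\mathcal{R}:=\{Y\in\mathcal{S}^q:\operatorname{rank}(Y)\le1\}$. *)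

(* Real sym_mx matrices over an arbitrary real field R
   (the paper's R is the instance R = reals; the statement is order-algebraic). *)
From HB Require Import structures.
From mathcomp Require Import all_boot all_order all_algebra.
Set Implicit Arguments. Unset Strict Implicit. Unset Printing Implicit Defensive.
Import Order.TTheory GRing.Theory Num.Theory.
Local Open Scope ring_scope.

Definition sym_mx (R : realFieldType) (q : nat) (Y : 'M[R]_q) : Prop := Y^T = Y.

Definition psd (R : realFieldType) (q : nat) (Y : 'M[R]_q) : Prop :=
  forall x : 'cV[R]_q, 0 <= (x^T *m Y *m x) 0 0.

Definition nonneg_mx (R : realFieldType) (q : nat) (Y : 'M[R]_q) : Prop :=
  forall i j, 0 <= Y i j.

Definition tr_inner (R : realFieldType) (q : nat) (P Q : 'M[R]_q) : R := \tr (P *m Q).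

Definition Omega (R : realFieldType) (q m : nat)
  (A : 'M[R]_q -> 'rV[R]_m) (b : 'rV[R]_m) (Y : 'M[R]_q) : Prop :=
  sym_mx Y /\ psd Y /\ nonneg_mx Y /\ A Y = b.

Definition rank_le1 (R : realFieldType) (q : nat) (Y : 'M[R]_q) : Prop :=
  sym_mx Y /\ (\rank Y <= 1)%N.

Definition bounded_set (R : realFieldType) (q : nat) (S : 'M[R]_q -> Prop) : Prop :=
  exists M : R, forall Y, S Y -> forall i j, `|Y i j| <= M.

Definition is_global_min (R : realFieldType) (q : nat)
  (S : 'M[R]_q -> Prop) (f : 'M[R]_q -> R) (Y : 'M[R]_q) : Prop :=
  S Y /\ forall Z, S Z -> f Y <= f Z.

From HB Require Import structures.
From mathcomp Require Import all_boot all_order all_algebra.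
From mathcomp Require Import lra.
Import Order.TTheory GRing.Theory Num.Theory.
Local Open Scope ring_scope.

(* Exact penalty principle: let S be a set, f a real objective with
   |f| <= K on S, and r a nat-valued "complexity" that is >= 1 on S.  If
   some point of S has r <= 1, then for every rho > 2K the minimizers of
   f + rho * r over S are exactly the minimizers of f over {Y in S | r Y <= 1}:
   on that subset the penalty is the constant rho, while any point with r >= 2
   pays at least -K + 2 rho > K + rho, more than any feasible point.

   The theorem instantiates S := Omega, f := <Cbar, .>, r := rank.  Boundedness
   of Omega bounds the trace inner product (lemma [tr_inner_bound]), and
   0 \notin Omega makes every rank positive on Omega; rhobar := 2K + 1. *)

Section ExactPenalty.

Context {R : realFieldType} {q : nat}.
Context {S : 'M[R]_q -> Prop} {f : 'M[R]_q -> R} {r : 'M[R]_q -> nat} {K : R}.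

Hypothesis f_bounded : forall Y, S Y -> `|f Y| <= K.
Hypothesis r_pos : forall Y, S Y -> (0 < r Y)%N.

Context {rho : R}.
Hypothesis rho_large : 2 * K < rho.

Let penalized (Z : 'M[R]_q) : R := f Z + rho * (r Z)%:R.
Let feasible (Z : 'M[R]_q) : Prop := S Z /\ (r Z <= 1)%N.

Lemma penalized_feasible {Y} : feasible Y -> penalized Y = f Y + rho.
Proof.
move=> [SY r_le1]; have rY1 : r Y = 1%N by apply/eqP; rewrite eqn_leq r_le1 r_pos.
by rewrite /penalized rY1 mulr1.
Qed.

Lemma penalized_gap {Y Z} : S Y -> S Z -> ~~ (r Z <= 1)%N ->
  f Y + rho < penalized Z.
Proof.
move=> SY SZ; rewrite -ltnNge => r_ge2.
have rZ2 : rho * 2%:R <= rho * (r Z)%:R.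
  rewrite ler_wpM2l ?ler_nat //.
  by have := rho_large; have := f_bounded _ SY; have := normr_ge0 (f Y); lra.
move: (f_bounded _ SY) (f_bounded _ SZ); rewrite /penalized !ler_norml.
move=> /andP[_ fY_le] /andP[fZ_ge _]; move: rZ2 rho_large.
rewrite -[2%:R]/(1 + 1 : R); lra.
Qed.

Lemma exact_penalty {Y0 : 'M[R]_q} : feasible Y0 ->
  forall Y, is_global_min S penalized Y <-> is_global_min feasible f Y.
Proof.
move=> feasY0 Y; split.
- move=> [SY minY].
  have feasY : feasible Y.
    split=> //; apply: contraT => r_gt1.
    have := minY Y0 feasY0.1; rewrite (penalized_feasible feasY0) => Y_le_Y0.
    by have := lt_le_trans (penalized_gap feasY0.1 SY r_gt1) Y_le_Y0;
       rewrite ltxx.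
  split=> // Z feasZ; have := minY Z feasZ.1.
  by rewrite !penalized_feasible // lerD2r.
- move=> [feasY minY]; split=> [|Z SZ]; first exact: feasY.1.
  rewrite penalized_feasible //; have [r_le1 | r_gt1] := boolP (r Z <= 1)%N.
  + by rewrite penalized_feasible // lerD2r; apply: minY.
  + exact/ltW/(penalized_gap feasY.1 SZ r_gt1).
Qed.

End ExactPenalty.

Lemma is_global_min_ext {R : realFieldType} {q : nat} {S1 S2 : 'M[R]_q -> Prop}
    {f : 'M[R]_q -> R} {Y : 'M[R]_q} :
  (forall Z, S1 Z <-> S2 Z) -> is_global_min S1 f Y <-> is_global_min S2 f Y.
Proof.
move=> S12; split=> -[SY minY].
- by split=> [|Z /S12 S1Z]; [apply/S12 | apply: minY].
- by split=> [|Z /S12 S2Z]; [apply/S12 | apply: minY].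
Qed.

Lemma tr_inner_bound {R : realFieldType} {q : nat} (C : 'M[R]_q) {Y : 'M[R]_q} {M : R} :
  (forall i j, `|Y i j| <= M) ->
  `|tr_inner C Y| <= \sum_i \sum_j `|C i j| * M.
Proof.
move=> Y_bounded; rewrite /tr_inner /mxtrace.
apply: le_trans (ler_norm_sum _ _ _) _; apply: ler_sum => i _.
rewrite mxE; apply: le_trans (ler_norm_sum _ _ _) _; apply: ler_sum => j _.
by rewrite normrM ler_wpM2l.
Qed.

Theorem theorem4 (R : realFieldType) (q m : nat) (Cbar : 'M[R]_q)
  (A : {linear 'M[R]_q -> 'rV[R]_m}) (b : 'rV[R]_m) :
  sym_mx Cbar ->
  (exists Y, Omega A b Y) ->
  bounded_set (Omega A b) ->
  ~ Omega A b 0 ->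
  (exists Y, Omega A b Y /\ rank_le1 Y) ->
  exists rhobar : R, 0 < rhobar /\
    forall rho : R, rhobar <= rho ->
      forall Y : 'M[R]_q,
        is_global_min (Omega A b) (fun Z => tr_inner Cbar Z + rho * (\rank Z)%:R) Y
        <-> is_global_min (fun Z => Omega A b Z /\ rank_le1 Z) (tr_inner Cbar) Y.
Proof.
move=> _ _ [M Omega_bounded] Omega_no0 [Y0 [OmY0 [_ rkY0]]].
set K := `|\sum_i \sum_j `|Cbar i j| * M|.
have K_ge0 : 0 <= K by apply: normr_ge0.
have obj_bounded Y : Omega A b Y -> `|tr_inner Cbar Y| <= K.
  move=> OmY; apply: le_trans (tr_inner_bound Cbar (Omega_bounded Y OmY)) _.
  exact: ler_norm.
have rank_pos Y : Omega A b Y -> (0 < \rank Y)%N.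
  by move=> OmY; rewrite lt0n mxrank_eq0; apply: contraPneq Omega_no0 => <-.
exists (2 * K + 1); split=> [|rho rho_ge Y]; first lra.
have rho_large : 2 * K < rho by lra.
rewrite (exact_penalty obj_bounded rank_pos rho_large (conj OmY0 rkY0)).
apply: is_global_min_ext => Z.
by split=> [[OmZ rkZ] | [OmZ [_ rkZ]]]; do ![split=> //]; case: OmZ.
Qed.
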